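(* The variety $\mathsf{V}(S_{(4,475)})$ is the ai-semiring variety defined by the identity $xy\approx x^2$.
   Context: An ai-semiring is an algebra $(S,+,\cdot)$ with $(S,+)$ a semilattice, $(S,\cdot)$ a semigroup, and both distributive laws. $\mathsf{V}(S)$ is the variety generated by $S$; ''the ai-semiring variety defined by identities $\Sigma$'' is the class of all ai-semirings satisfying $\Sigma$. $S_{(4,475)}$ has carrier $\{1,2,3,4\}$; addition: $x+x=x$, $2+x=x$, $1+x=1$ for all $x$, $3+4=1$; multiplication (row $a$, column $b$ gives $a\cdot b$): row $1$: $3,3,3,3$; row $2$: $2,2,2,2$; row $3$: $3,3,3,3$; row $4$: $3,3,3,3$. *)

Definition ai_semiring (T : Type) (add mul : T -> T -> T) : Prop :=
  (forall x y z, add (add x y) z = add x (add y z)) /\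
  (forall x y, add x y = add y x) /\
  (forall x, add x x = x) /\
  (forall x y z, mul (mul x y) z = mul x (mul y z)) /\
  (forall x y z, mul x (add y z) = add (mul x y) (mul x z)) /\
  (forall x y z, mul (add x y) z = add (mul x z) (mul y z)).

Inductive S4 : Type := s1 | s2 | s3 | s4.

Definition S4_eqb (a b : S4) : bool :=
  match a, b with
  | s1, s1 | s2, s2 | s3, s3 | s4, s4 => true
  | _, _ => false
  end.

(* x+x=x, 2+x=x+2=x, 1+x=x+1=1, 3+4=4+3=1 *)
Definition S4_add (a b : S4) : S4 :=
  if S4_eqb a b then a else
  match a, b with
  | s2, _ => b
  | _, s2 => a
  | _, _ => s1
  end.

Definition S4_mul (a b : S4) : S4 :=
  match a with
  | s2 => s2
  | _ => s3
  end.

(** Membership of an algebra (T,add,mul) of type (2,2) in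
    V(S_(4,475)) = HSP(S_(4,475)): T is a homomorphic image of a
    subalgebra B of a direct power S^I (I an arbitrary index type). *)
Definition in_V_S4 (T : Type) (add mul : T -> T -> T) : Prop :=
  exists (I : Type) (B : (I -> S4) -> Prop),
    (forall x y, B x -> B y -> B (fun i => S4_add (x i) (y i))) /\
    (forall x y, B x -> B y -> B (fun i => S4_mul (x i) (y i))) /\
    exists h : {x : I -> S4 | B x} -> T,
      (forall t : T, exists x, h x = t) /\
      (forall x y z : {x : I -> S4 | B x},
          proj1_sig z = (fun i => S4_add (proj1_sig x i) (proj1_sig y i)) ->
          h z = add (h x) (h y)) /\
      (forall x y z : {x : I -> S4 | B x},
          proj1_sig z = (fun i => S4_mul (proj1_sig x i) (proj1_sig y i)) ->
          h z = mul (h x) (h y)).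

(* S_(4,475) satisfies the ai-semiring axioms and xy = x^2, and a class defined
   by identities is closed under products, subalgebras and homomorphic images.

   Conversely, in a model T of these identities squaring is additive and
   idempotent, so T is a homomorphic image of the algebra of formal elements
   a + c^2 with a, c in T + {0}, not both 0, where
   (a, c) + (b, d) = (a + b, c + d) and (a, c)(b, d) = (0, a + c).
   This algebra embeds into a power of S_(4,475): the coordinate indexed by a
   principal ideal I of T + {0} sends (a, c) to u + v^2, where u, v in {2, 4}
   record whether a, c lie in I.  Principal ideals separate points, and
   (u, v) |-> u + v^2 is injective on {2, 4}^2. *)

From Stdlib Require Import FunctionalExtensionality ProofIrrelevance ClassicalEpsilon.

Set Implicit Arguments.
Record ai_sq_semiring (T : Type) (add mul : T -> T -> T) : Prop := {
  add_assoc : forall x y z, add (add x y) z = add x (add y z);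
  add_comm : forall x y, add x y = add y x;
  add_idem : forall x, add x x = x;
  mul_assoc : forall x y z, mul (mul x y) z = mul x (mul y z);
  mul_addr : forall x y z, mul x (add y z) = add (mul x y) (mul x z);
  mul_addl : forall x y z, mul (add x y) z = add (mul x z) (mul y z);
  mul_sq : forall x y, mul x y = mul x x }.
Unset Implicit Arguments.
Arguments ai_sq_semiring : clear implicits.

Lemma ai_sq_semiringP (T : Type) (add mul : T -> T -> T) :
  ai_sq_semiring T add mul <->
  ai_semiring T add mul /\ (forall x y : T, mul x y = mul x x).
Proof.
  split.
  - intros []; repeat split; assumption.
  - intros [(? & ? & ? & ? & ? & ?) ?]; constructor; assumption.
Qed.

Lemma ai_sq_semiring_pow (I A : Type) (add mul : A -> A -> A) :
  ai_sq_semiring A add mul ->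
  ai_sq_semiring (I -> A) (fun (f g : I -> A) i => add (f i) (g i))
                 (fun (f g : I -> A) i => mul (f i) (g i)).
Proof. intros []; constructor; intros; extensionality i; auto. Qed.

Definition sub_op (A : Type) (B : A -> Prop) (op : A -> A -> A)
    (closed : forall x y, B x -> B y -> B (op x y)) (x y : sig B) : sig B :=
  exist B (op (proj1_sig x) (proj1_sig y)) (closed _ _ (proj2_sig x) (proj2_sig y)).
Arguments sub_op {A B op} closed x y.

Lemma ai_sq_semiring_sub (A : Type) (add mul : A -> A -> A) (B : A -> Prop)
    (B_add : forall x y, B x -> B y -> B (add x y))
    (B_mul : forall x y, B x -> B y -> B (mul x y)) :
  ai_sq_semiring A add mul -> ai_sq_semiring (sig B) (sub_op B_add) (sub_op B_mul).
Proof.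
  intros []; constructor; intros;
    repeat match goal with x : sig B |- _ => destruct x end;
    apply subset_eq_compat; cbn; auto.
Qed.

Lemma ai_sq_semiring_image (A T : Type) (addA mulA : A -> A -> A)
    (add mul : T -> T -> T) (h : A -> T) :
  (forall t, exists a, h a = t) ->
  (forall a b, h (addA a b) = add (h a) (h b)) ->
  (forall a b, h (mulA a b) = mul (h a) (h b)) ->
  ai_sq_semiring A addA mulA -> ai_sq_semiring T add mul.
Proof.
  intros h_onto h_add h_mul []; constructor; intros;
    repeat match goal with t : T |- _ => destruct (h_onto t) as [? <-] end;
    repeat (rewrite <- h_add || rewrite <- h_mul); f_equal; auto.
Qed.

Lemma S4_ai_sq_semiring : ai_sq_semiring S4 S4_add S4_mul.
Proof.
  constructor; intros; repeat match goal with x : S4 |- _ => destruct x end;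
    reflexivity.
Qed.

Lemma in_V_S4_ai_sq_semiring (T : Type) (add mul : T -> T -> T) :
  in_V_S4 T add mul -> ai_sq_semiring T add mul.
Proof.
  intros (I & B & B_add & B_mul & h & h_onto & h_add & h_mul).
  apply (ai_sq_semiring_image _ _ (sub_op B_add) (sub_op B_mul) add mul h h_onto).
  - intros; apply h_add; reflexivity.
  - intros; apply h_mul; reflexivity.
  - apply ai_sq_semiring_sub, ai_sq_semiring_pow, S4_ai_sq_semiring.
Qed.

Lemma S4_add_s2_l (x : S4) : S4_add s2 x = x.
Proof. destruct x; reflexivity. Qed.

Lemma S4_add_sq_inj (u v u' v' : S4) :
  (u = s2 \/ u = s4) -> (v = s2 \/ v = s4) ->
  (u' = s2 \/ u' = s4) -> (v' = s2 \/ v' = s4) ->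
  S4_add u (S4_mul v v) = S4_add u' (S4_mul v' v') -> u = u' /\ v = v'.
Proof.
  intros [-> | ->] [-> | ->] [-> | ->] [-> | ->]; cbn; intro E;
    solve [discriminate | split; reflexivity].
Qed.

Lemma sq_add (T : Type) (add mul : T -> T -> T) (HT : ai_sq_semiring T add mul)
    (x y : T) :
  mul (add x y) (add x y) = add (mul x x) (mul y y).
Proof. rewrite (mul_addl HT), (mul_sq HT x), (mul_sq HT y). reflexivity. Qed.

Lemma sq_idem (T : Type) (add mul : T -> T -> T) (HT : ai_sq_semiring T add mul)
    (x : T) :
  mul (mul x x) (mul x x) = mul x x.
Proof. rewrite (mul_assoc HT). apply (mul_sq HT). Qed.

Section AdditiveMap.

Variables (A : Type) (join : A -> A -> A) (f : A -> A).
Hypothesis join_assoc : forall x y z, join (join x y) z = join x (join y z).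
Hypothesis join_comm : forall x y, join x y = join y x.
Hypothesis f_join : forall x y, f (join x y) = join (f x) (f y).

Lemma join_interchange_map (a b c d : A) :
  join (join a (f c)) (join b (f d)) = join (join a b) (f (join c d)).
Proof.
  rewrite f_join, !join_assoc. f_equal.
  rewrite <- !join_assoc. f_equal. apply join_comm.
Qed.

Hypothesis f_idem : forall x, f (f x) = f x.

Lemma map_join_map (a c : A) : f (join a (f c)) = f (join a c).
Proof. rewrite !f_join, f_idem. reflexivity. Qed.

End AdditiveMap.

Section PrincipalIdeals.

Variables (L : Type) (join : L -> L -> L).
Hypothesis join_assoc : forall x y z, join (join x y) z = join x (join y z).
Hypothesis join_comm : forall x y, join x y = join y x.
Hypothesis join_idem : forall x, join x x = x.

(* As [s2 + s4 = s4], this indicator of the principal ideal of [b] is a join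
   homomorphism into S4. *)
Definition ideal_char (b x : L) : S4 :=
  if excluded_middle_informative (join x b = b) then s2 else s4.

Lemma join_le_iff (b x y : L) :
  join (join x y) b = b <-> join x b = b /\ join y b = b.
Proof.
  split.
  - intros H; split.
    + rewrite <- H at 1. rewrite <- join_assoc, <- (join_assoc x x), join_idem.
      exact H.
    + rewrite <- H at 1. rewrite <- join_assoc, (join_comm x y),
        <- (join_assoc y y), join_idem, (join_comm y x).
      exact H.
  - intros [Hx Hy]. rewrite join_assoc, Hy. exact Hx.
Qed.

Lemma ideal_char_join (b x y : L) :
  ideal_char b (join x y) = S4_add (ideal_char b x) (ideal_char b y).
Proof.
  unfold ideal_char. destruct (join_le_iff b x y) as [le_split le_join].
  destruct (excluded_middle_informative (join (join x y) b = b));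
  destruct (excluded_middle_informative (join x b = b));
  destruct (excluded_middle_informative (join y b = b));
    reflexivity || (exfalso; tauto).
Qed.

Lemma ideal_char_s2 (b x : L) : ideal_char b x = s2 <-> join x b = b.
Proof.
  unfold ideal_char. destruct excluded_middle_informative; split; congruence.
Qed.

Lemma ideal_char_values (b x : L) : ideal_char b x = s2 \/ ideal_char b x = s4.
Proof. unfold ideal_char. destruct excluded_middle_informative; auto. Qed.

Lemma ideal_char_separates (x y : L) :
  (forall b, ideal_char b x = ideal_char b y) -> x = y.
Proof.
  intros H.
  assert (in_own : forall z, ideal_char z z = s2)
    by (intros z; apply ideal_char_s2, join_idem).
  assert (yx : join y x = x) by (apply ideal_char_s2; rewrite <- H; apply in_own).
  assert (xy : join x y = y) by (apply ideal_char_s2; rewrite H; apply in_own).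
  rewrite <- xy, join_comm. symmetry. exact yx.
Qed.

End PrincipalIdeals.

Arguments ideal_char {L} join b x.

Section AdjoinedZero.

Variables (T : Type) (add : T -> T -> T).

Definition ojoin (o o' : option T) : option T :=
  match o, o' with
  | Some x, Some y => Some (add x y)
  | Some x, None => Some x
  | None, _ => o'
  end.

Lemma ojoin_assoc :
  (forall x y z, add (add x y) z = add x (add y z)) ->
  forall o o' o'', ojoin (ojoin o o') o'' = ojoin o (ojoin o' o'').
Proof. intros H [x|] [y|] [z|]; cbn; f_equal; auto. Qed.

Lemma ojoin_comm :
  (forall x y, add x y = add y x) -> forall o o', ojoin o o' = ojoin o' o.
Proof. intros H [x|] [y|]; cbn; f_equal; auto. Qed.

Lemma ojoin_idem : (forall x, add x x = x) -> forall o, ojoin o o = o.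
Proof. intros H [x|]; cbn; f_equal; auto. Qed.

Lemma option_map_ojoin (f : T -> T) :
  (forall x y, f (add x y) = add (f x) (f y)) ->
  forall o o', option_map f (ojoin o o') = ojoin (option_map f o) (option_map f o').
Proof. intros H [x|] [y|]; cbn; f_equal; auto. Qed.

Lemma option_map_idem (f : T -> T) :
  (forall x, f (f x) = f x) -> forall o, option_map f (option_map f o) = option_map f o.
Proof. intros H [x|]; cbn; f_equal; auto. Qed.

End AdjoinedZero.

Arguments ojoin {T} add o o'.

Section Representation.

Variables (T : Type) (add mul : T -> T -> T).
Hypothesis HT : ai_sq_semiring T add mul.

Let ojoinA := ojoin_assoc _ _ (add_assoc HT).
Let ojoinC := ojoin_comm _ _ (add_comm HT).
Let ojoinI := ojoin_idem _ _ (add_idem HT).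
Local Notation sq x := (mul x x).

Let option_sq_ojoin := option_map_ojoin _ add (fun x => sq x) (sq_add _ _ _ HT).
Let option_sq_idem := option_map_idem _ (fun x => sq x) (sq_idem _ _ _ HT).
Local Notation chi := (ideal_char (ojoin add)).

(* A pair [(a, c)] stands for the formal element [a + c^2] of [T], where
   [None] marks an absent summand. *)
Definition eval (p : option T * option T) : option T :=
  ojoin add (fst p) (option_map (fun x => sq x) (snd p)).

Definition pair_add (p q : option T * option T) : option T * option T :=
  (ojoin add (fst p) (fst q), ojoin add (snd p) (snd q)).

(* [(a + c^2) y = (a + c^2)^2 = (a + c)^2] *)
Definition pair_mul (p q : option T * option T) : option T * option T :=
  (None, ojoin add (fst p) (snd p)).

Definition embed (p : option T * option T) (i : option T) : S4 :=
  S4_add (chi i (fst p)) (S4_mul (chi i (snd p)) (chi i (snd p))).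

Lemma eval_add (p q : option T * option T) :
  eval (pair_add p q) = ojoin add (eval p) (eval q).
Proof.
  unfold eval, pair_add; cbn. symmetry.
  apply join_interchange_map; assumption.
Qed.

Lemma eval_mul (p q : option T * option T) :
  eval (pair_mul p q) = option_map (fun x => sq x) (eval p).
Proof.
  unfold eval, pair_mul; cbn. symmetry.
  apply map_join_map; assumption.
Qed.

Lemma embed_add (p q : option T * option T) :
  embed (pair_add p q) = fun i => S4_add (embed p i) (embed q i).
Proof.
  extensionality i. unfold embed, pair_add; cbn.
  rewrite !ideal_char_join by assumption. symmetry.
  apply (join_interchange_map _ _ (fun x => S4_mul x x)).
  - exact (add_assoc S4_ai_sq_semiring).
  - exact (add_comm S4_ai_sq_semiring).
  - exact (sq_add _ _ _ S4_ai_sq_semiring).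
Qed.

Lemma embed_mul (p q : option T * option T) :
  embed (pair_mul p q) = fun i => S4_mul (embed p i) (embed q i).
Proof.
  extensionality i. unfold embed, pair_mul; cbn.
  rewrite (mul_sq S4_ai_sq_semiring (S4_add _ _)), ideal_char_join by assumption.
  rewrite (proj2 (ideal_char_s2 _ (ojoin add) i None)), S4_add_s2_l by reflexivity.
  symmetry. apply (map_join_map _ _ (fun x => S4_mul x x)).
  - exact (sq_add _ _ _ S4_ai_sq_semiring).
  - exact (sq_idem _ _ _ S4_ai_sq_semiring).
Qed.

Lemma embed_inj (p q : option T * option T) : embed p = embed q -> p = q.
Proof.
  intros E.
  assert (coords : forall i, chi i (fst p) = chi i (fst q) /\ chi i (snd p) = chi i (snd q)).
  { intros i. apply S4_add_sq_inj; try apply ideal_char_values.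
    exact (equal_f E i). }
  destruct p, q; f_equal; apply (ideal_char_separates _ _ ojoinC ojoinI);
    intros i; apply coords.
Qed.

Definition represents (x : option T -> S4) (t : T) : Prop :=
  exists p, eval p = Some t /\ x = embed p.

Lemma represents_unique (x : option T -> S4) (t s : T) :
  represents x t -> represents x s -> t = s.
Proof.
  intros (p & Hp & ->) (q & Hq & E).
  apply embed_inj in E as <-. congruence.
Qed.

Lemma represents_embed (t : T) : represents (embed (Some t, None)) t.
Proof. exists (Some t, None). split; reflexivity. Qed.

Lemma represents_add (x y : option T -> S4) (t s : T) :
  represents x t -> represents y s ->
  represents (fun i => S4_add (x i) (y i)) (add t s).
Proof.
  intros (p & Hp & ->) (q & Hq & ->). exists (pair_add p q).
  rewrite eval_add, embed_add, Hp, Hq. split; reflexivity.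
Qed.

Lemma represents_mul (x y : option T -> S4) (t s : T) :
  represents x t -> represents y s ->
  represents (fun i => S4_mul (x i) (y i)) (mul t s).
Proof.
  intros (p & Hp & ->) (q & Hq & ->). exists (pair_mul p q).
  rewrite eval_mul, embed_mul, Hp, (mul_sq HT t s). split; reflexivity.
Qed.

Definition representable (x : option T -> S4) : Prop := exists t, represents x t.

Definition value (x : sig representable) : T :=
  proj1_sig (constructive_indefinite_description _ (proj2_sig x)).

Lemma value_spec (x : sig representable) : represents (proj1_sig x) (value x).
Proof.
  unfold value. destruct constructive_indefinite_description as [t Ht]. exact Ht.
Qed.

Lemma value_unique (x : sig representable) (t : T) :
  represents (proj1_sig x) t -> value x = t.
Proof. apply represents_unique, value_spec. Qed.

Lemma ai_sq_semiring_in_V_S4 : in_V_S4 T add mul.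
Proof.
  exists (option T), representable. split; [| split].
  - intros x y [t Ht] [s Hs]. exists (add t s). apply represents_add; assumption.
  - intros x y [t Ht] [s Hs]. exists (mul t s). apply represents_mul; assumption.
  - exists value. split; [| split].
    + intros t. exists (exist representable _ (ex_intro _ t (represents_embed t))).
      apply value_unique, represents_embed.
    + intros x y [z Bz] Hz; cbn in Hz; subst z.
      apply value_unique, represents_add; apply value_spec.
    + intros x y [z Bz] Hz; cbn in Hz; subst z.
      apply value_unique, represents_mul; apply value_spec.
Qed.

End Representation.

Theorem proposition4p5 :
  forall (T : Type) (add mul : T -> T -> T),
    in_V_S4 T add mul <->
    (ai_semiring T add mul /\ forall x y : T, mul x y = mul x x).
Proof.
  intros T add mul. rewrite <- ai_sq_semiringP. split.
  - apply in_V_S4_ai_sq_semiring.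
  - apply ai_sq_semiring_in_V_S4.
Qed.
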